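(* For all positive integers $m,n,w,d$ with $2w\le m$, $$A(m,n,w,d)\ge\sqrt{\pi wn}\;2^{-\frac{n}{2}(3+\log_2 w)}\,B(mn,nw,d).$$
   Context: $J(m,w)$ denotes the set of binary vectors of length $m$ and Hamming weight $w$. Elements of $J(m,w)^n$ are identified with $m\times n$ binary matrices all of whose columns have weight $w$, with binary Hamming distance. $A(m,n,w,d)$ is the maximum cardinality of a nonempty subset of $J(m,w)^n$ with pairwise Hamming distances at least $2d$. $B(N,W,d)$ is the maximum cardinality of a nonempty subset of $J(N,W)$ with pairwise Hamming distances at least $2d$. Here $\pi$ is the circle constant. *)

From mathcomp Require Import all_boot.
Set Implicit Arguments.
Unset Strict Implicit.
Unset Printing Implicit Defensive.

Definition bweight (N : nat) (x : {ffun 'I_N -> bool}) : nat := #|[set i | x i]|.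

Definition bdist (N : nat) (x y : {ffun 'I_N -> bool}) : nat :=
  #|[set i | x i != y i]|.

Definition inJ (N W : nat) (x : {ffun 'I_N -> bool}) : bool := bweight x == W.

Definition is_constant_weight_code (N W d : nat) (C : {set {ffun 'I_N -> bool}}) : bool :=
  [&& C != set0,
      [forall x in C, inJ W x] &
      [forall x in C, forall y in C, (x != y) ==> (2 * d <= bdist x y)]].

Definition B (N W d : nat) : nat :=
  \max_(C : {set {ffun 'I_N -> bool}} | is_constant_weight_code W d C) #|C|.

(* Elements of J(m,w)^n as m x n binary matrices (entries indexed by 'I_m * 'I_n),
   all columns of weight w; binary Hamming distance on all m*n entries. *)
Definition mat (m n : nat) := {ffun 'I_m * 'I_n -> bool}.

Definition col_weight (m n : nat) (M : mat m n) (j : 'I_n) : nat :=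
  #|[set i : 'I_m | M (i, j)]|.

Definition inJn (m n w : nat) (M : mat m n) : bool :=
  [forall j : 'I_n, col_weight M j == w].

Definition mdist (m n : nat) (M M' : mat m n) : nat :=
  #|[set ij : 'I_m * 'I_n | M ij != M' ij]|.

Definition is_multi_cw_code (m n w d : nat) (C : {set mat m n}) : bool :=
  [&& C != set0,
      [forall M in C, inJn w M] &
      [forall M in C, forall M' in C, (M != M') ==> (2 * d <= mdist M M')]].

Definition A (m n w d : nat) : nat :=
  \max_(C : {set mat m n} | is_multi_cw_code w d C) #|C|.

(* Reshape the words of a constant weight code C in J(mn, nw) into m x n
   matrices of total weight nw.  The permutations of the mn positions act
   transitively on these matrices, so by double counting some permutation maps
   at least |C| |J(m,w)^n| / |J(mn,nw)| codewords into J(m,w)^n, where they form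
   a multiple constant weight code; hence B(mn,nw,d) C(m,w)^n <= A(m,n,w,d)
   C(mn,nw).  It remains to estimate C(mn,nw) / C(m,w)^n: comparing falling
   factorials block by block gives C(mn,nw) (nw)! <= n^(nw) (C(m,w) w!)^n, and
   induction on w (starting from 4n n^(2n) <= 8^n n!^2, i.e. from
   (1 + 1/n)^(2n+1) <= 8) gives 4wn (n^(nw) w!^n)^2 <= (8w)^n (nw)!^2.
   Together with pi <= 4 and 2^(-(n/2)(3 + log2 w)) = (8w)^(-n/2) this is the
   claimed bound. *)

From Stdlib Require Import Reals Lra ZArith Lia.
From mathcomp Require Import all_boot all_fingroup zify.

Set Implicit Arguments.
Unset Strict Implicit.
Unset Printing Implicit Defensive.

Section RealBounds.
Local Open Scope R_scope.

Lemma INR_expn (m k : nat) : INR (m ^ k) = INR m ^ k.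
Proof. by elim: k => [|k IH] //; rewrite expnS mult_INR IH. Qed.

Lemma exp_pow (x : R) (k : nat) : exp x ^ k = exp (INR k * x).
Proof.
have pos := exp_pos x.
by rewrite -[LHS]exp_ln ?ln_pow ?ln_exp //; apply: pow_lt.
Qed.

Lemma exp1_leq : exp 1 <= 11 / 4.
Proof.
have exp_inv50 : exp (1 / 50) <= 50 / 49.
  have lower := exp_ineq1_le (- (1 / 50)).
  rewrite exp_Ropp in lower.
  rewrite -[exp _]Rinv_inv (_ : 50 / 49 = / (49 / 50)); last by field.
  by apply: Rinv_le_contravar; lra.
rewrite (_ : 1 = INR 50 * (1 / 50)); last by rewrite INR_IZR_INZ /=; field.
rewrite -exp_pow; apply: (Rle_trans _ ((50 / 49) ^ 50)); last by lra.
by apply: pow_incr; split; [left; apply: exp_pos | ].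
Qed.

(* (1 + 1/n)^(2n+1) <= (1 + 1/n) e^2 <= (21/20) (11/4)^2 < 8 for n >= 20. *)
Lemma expn_succ_leq8_large (n : nat) :
  (19 < n)%nat -> (n.+1 ^ (2 * n + 1) <= 8 * n ^ (2 * n + 1))%nat.
Proof.
move=> /leP/le_INR; rewrite (INR_IZR_INZ 20) /= => n_ge20.
apply/leP/INR_le; rewrite mult_INR !INR_expn S_INR (INR_IZR_INZ 8) /=.
have succ_le : INR n + 1 <= INR n * exp (/ INR n).
  have := exp_ineq1_le (/ INR n).
  have -> : INR n + 1 = INR n * (1 + / INR n) by field; lra.
  by move=> le; apply: Rmult_le_compat_l; lra.
have succ_pow_n : (INR n + 1) ^ n <= INR n ^ n * (11 / 4).
  apply: (Rle_trans _ ((INR n * exp (/ INR n)) ^ n)).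
    by apply: pow_incr; lra.
  rewrite Rpow_mult_distr exp_pow (_ : INR n * / INR n = 1); last by field; lra.
  apply: Rmult_le_compat_l; last exact: exp1_leq.
  by apply: pow_le; lra.
have pow_ge0 : 0 <= INR n ^ n by apply: pow_le; lra.
have succ_pow_ge0 : 0 <= (INR n + 1) ^ n by apply: pow_le; lra.
rewrite (_ : (2 * n)%nat = (n + n)%nat); last by lia.
rewrite !pow_add pow_1.
apply: (Rle_trans _ (INR n ^ n * (11 / 4) * (INR n ^ n * (11 / 4)) * (INR n * (21 / 20)))).
  by apply: Rmult_le_compat; [nra | lra | apply: Rmult_le_compat | lra].
have prod_ge0 : 0 <= INR n ^ n * INR n ^ n * INR n by apply: Rmult_le_pos; [nra | lra].
lra.
Qed.

End RealBounds.

(* The bound is attained at n = 1; below 20 it is checked by evaluation. *)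
Lemma expn_succ_leq8 n : 0 < n -> n.+1 ^ (2 * n + 1) <= 8 * n ^ (2 * n + 1).
Proof.
move=> n_gt0; have [small | large] := ltnP n 20; last exact: expn_succ_leq8_large.
have table : all (fun k => Z.leb ((Z.of_nat k + 1) ^ (2 * Z.of_nat k + 1))
                                 (8 * Z.of_nat k ^ (2 * Z.of_nat k + 1)))
                 (iota 1 19) by vm_compute.
have := allP table n; rewrite mem_iota n_gt0 small => /(_ isT).
by zify.
Qed.

Lemma fact_sqr_lbound n : 0 < n -> 4 * n * n ^ (2 * n) <= 8 ^ n * n`! ^ 2.
Proof.
elim: n => // n IH _; case: n IH => [|k /(_ isT) IH]; first by [].
have step := @expn_succ_leq8 k.+1 isT.
rewrite addn1 [k.+1 ^ _.+1]expnSr in step.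
rewrite (_ : 2 * k.+2 = (2 * k.+1).+2); last by lia.
rewrite expnS (expnS 8) factS.
move: (k.+1 ^ (2 * k.+1)) (k.+2 ^ (2 * k.+1).+1) (8 ^ k.+1) (k.+1`!) IH step.
move=> P Q E F IH step.
apply: (@leq_trans (8 * k.+2 ^ 2 * (4 * k.+1 * P))); first nia.
have := leq_mul (leqnn (8 * k.+2 ^ 2)) IH.
by rewrite expnMn; lia.
Qed.

Lemma bernoulli_leq a k : (a + k.+1) * a ^ k <= a.+1 ^ k.+1.
Proof.
elim: k => [|k IH]; first by rewrite expn0 expn1 muln1 addn1.
rewrite expnS [a.+1 ^ k.+2]expnS.
apply: leq_trans (_ : a.+1 * ((a + k.+1) * a ^ k) <= _); first nia.
by rewrite leq_mul2l IH orbT.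
Qed.

(* The factors a + n - i and a + 1 + i of the two copies pair up to at least
   (a + n) (a + 1). *)
Lemma ffact_sqr_lbound a n : ((a + n) * (a + 1)) ^ n <= ((a + n) ^_ n) ^ 2.
Proof.
rewrite ffact_prod -mulnn {2}(reindex_inj rev_ord_inj) -big_split /=.
rewrite (_ : _ ^ n = \prod_(i < n) ((a + n) * (a + 1))); last first.
  by rewrite prod_nat_const card_ord.
by apply: leq_prod => i _ /=; have := ltn_ord i; nia.
Qed.

Lemma ffact_block_sqr_lbound n w : 0 < n ->
  n ^ (2 * n) * w.+1 ^ n.+1 * w ^ n.-1 <= ((n * w.+1) ^_ n) ^ 2.
Proof.
case: n => // k _; rewrite [k.+1 * w.+1]mulnSr /=.
apply: leq_trans (ffact_sqr_lbound (k.+1 * w) k.+1).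
rewrite expnMn addn1.
apply: leq_trans (leq_mul (leqnn _) (bernoulli_leq (k.+1 * w) k)).
rewrite -mulnSr !expnMn mul2n -addnn expnD expnS /=.
by rewrite [w.+1 ^ k.+2]expnS; apply: eq_leq; lia.
Qed.

Lemma multinomial_sqr_lbound n w : 0 < n -> 0 < w ->
  4 * w * n * (n ^ (n * w) * w`! ^ n) ^ 2 <= (8 * w) ^ n * (n * w)`! ^ 2.
Proof.
move=> n_gt0; elim: w => // w IH _; case: w IH => [_ | v /(_ isT) IH].
  by rewrite !muln1 exp1n muln1 -expnM (mulnC n 2); apply: fact_sqr_lbound.
have key := @ffact_block_sqr_lbound n v.+1 n_gt0.
have fact_split : (n * v.+2)`! = (n * v.+2) ^_ n * (n * v.+1)`!.
  by rewrite -(ffact_fact (leq_pmulr _ (ltn0Sn _))) mulnS addKn.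
have eV : v.+1 ^ n = v.+1 * v.+1 ^ n.-1 by rewrite -expnS prednK.
rewrite fact_split (_ : n ^ (n * v.+2) = n ^ n * n ^ (n * v.+1)); last first.
  by rewrite mulnS expnD.
rewrite [v.+2`!]factS; move: (v.+1`!) IH => f IH.
rewrite !expnMn; rewrite !expnMn eV in IH.
rewrite (mulnC 2 n) expnM [v.+2 ^ n.+1]expnS in key.
move: (n ^ (n * v.+1)) (f ^ n) (n ^ n) (v.+2 ^ n) ((n * v.+2) ^_ n) IH key.
move: ((n * v.+1)`!) (8 ^ n) (v.+1 ^ n.-1) => G E V P W Nn U F IH key.
rewrite -(leq_pmul2l (ltn0Sn v)).
apply: (@leq_trans (E * (v.+1 * V) * G ^ 2 * (v.+2 * Nn ^ 2 * U ^ 2))).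
  by apply: leq_trans (leq_mul IH (leqnn _)); apply: eq_leq; lia.
apply: (@leq_trans (E * v.+1 * G ^ 2 * U * F ^ 2)); last by apply: eq_leq; lia.
by apply: leq_trans (leq_mul (leqnn _) key); apply: eq_leq; lia.
Qed.

Lemma ffactnD a b c : a ^_ (b + c) = a ^_ b * (a - b) ^_ c.
Proof.
elim: c => [|c IH]; first by rewrite addn0 ffactn0 muln1.
by rewrite addnS !ffactnSr IH subnDA mulnA.
Qed.

Lemma ffact_leq_expn a c : a ^_ c <= a ^ c.
Proof.
elim: c => [|c IH] //; rewrite ffactnSr expnSr.
exact: leq_mul IH (leq_subr _ _).
Qed.

(* The nw factors form w blocks of n; the block after the first n i factors is
   at most (n (m - i))^n. *)
Lemma ffact_mul_ubound m n w : (m * n) ^_ (n * w) <= n ^ (n * w) * (m ^_ w) ^ n.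
Proof.
elim: w => [|w IH]; first by rewrite muln0 ffactn0 exp1n.
rewrite mulnS addnC ffactnD ffactnSr expnMn expnD mulnA.
apply: leq_trans (leq_mul IH (_ : _ <= (n * (m - w)) ^ n)) _.
  by rewrite mulnBr [m * n]mulnC; apply: ffact_leq_expn.
by rewrite expnMn; apply: eq_leq; lia.
Qed.

Lemma bin_sqr_ubound m n w : 0 < n -> 0 < w ->
  4 * w * n * 'C(m * n, n * w) ^ 2 <= (8 * w) ^ n * ('C(m, w) ^ n) ^ 2.
Proof.
move=> n_gt0 w_gt0.
have fact_pos : 0 < (n * w)`! ^ 2 by rewrite expn_gt0 fact_gt0.
rewrite -(leq_pmul2r fact_pos).
have block := ffact_mul_ubound m n w.
rewrite -!bin_ffact in block.
have multi := multinomial_sqr_lbound n_gt0 w_gt0.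
move: ('C(m * n, n * w)) ('C(m, w)) ((n * w)`!) (w`!) block multi.
move: (n ^ (n * w)) ((8 * w) ^ n) => X E c b F W block multi.
rewrite expnMn in block.
apply: (@leq_trans (4 * w * n * (X * W ^ n) ^ 2 * (b ^ n) ^ 2)).
  by have := leq_mul (leqnn (4 * w * n)) (leq_mul block block); lia.
by have := leq_mul multi (leqnn ((b ^ n) ^ 2)); lia.
Qed.

Section BoolFunctions.
Variable T : finType.
Implicit Types x y : {ffun T -> bool}.

Lemma card_bool_ffun_weight k :
  #|[set x : {ffun T -> bool} | #|[set i | x i]| == k]| = 'C(#|T|, k).
Proof.
have supp_bij : bijective (fun x : {ffun T -> bool} => [set i | x i]).
  exists (fun A : {set T} => [ffun i => i \in A]) => [x | A].
    by apply/ffunP => i; rewrite ffunE inE.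
  by apply/setP => i; rewrite !inE ffunE.
rewrite -card_draws -(on_card_preimset (onW_bij _ supp_bij)).
by apply: eq_card => x; rewrite !inE.
Qed.

Lemma count_fgraph x b : count_mem b (fgraph x) =
  if b then #|[set i | x i]| else #|T| - #|[set i | x i]|.
Proof.
have -> : count_mem b (fgraph x) = #|[set i | x i == b]|.
  by rewrite -codom_ffun codomE count_map -sum1_count -sum1dep_card big_enum_cond.
case: b; last rewrite -(cardsC [set i | x i]) addKn.
- by apply: eq_card => i; rewrite !inE; case: (x i).
- by apply: eq_card => i; rewrite !inE; case: (x i).
Qed.

Lemma bool_ffun_perm x y : #|[set i | x i]| = #|[set i | y i]| ->
  exists s : {perm T}, forall i, y i = x (s i).
Proof.
move=> eq_wt; have /tuple_permP[p graph_p] : perm_eq (fgraph y) (fgraph x).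
  by apply/allP => b _; rewrite /= !count_fgraph eq_wt.
have f_inj : injective (fun i => enum_val (p (enum_rank i))).
  by move=> i j /enum_val_inj/perm_inj/enum_rank_inj.
exists (perm f_inj) => i; rewrite permE.
have -> : y i = tnth (fgraph y) (enum_rank i) by rewrite tnth_fgraph enum_rankK.
by rewrite (tnth_nth false) graph_p nth_mktuple tnth_fgraph.
Qed.

End BoolFunctions.

Section PermAction.
Variables (T : finType) (U : Type).
Local Open Scope group_scope.

(* Acting through s^-1 makes this a right action, as {action _ &-> _} requires. *)
Definition ffun_perm_act (x : {ffun T -> U}) (s : {perm T}) : {ffun T -> U} :=
  [ffun i => x (s^-1 i)].

Lemma ffun_perm_act1 : ffun_perm_act^~ 1 =1 id.
Proof. by move=> x; apply/ffunP => i; rewrite ffunE invg1 perm1. Qed.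

Lemma ffun_perm_actM x : act_morph ffun_perm_act x.
Proof. by move=> s t; apply/ffunP => i; rewrite !ffunE invMg permM. Qed.

Definition ffun_perm_action := TotalAction ffun_perm_act1 ffun_perm_actM.

End PermAction.

Lemma card_ffun_perm_act_neq (T : finType) (U : eqType) (x y : {ffun T -> U}) s :
  #|[set i | ffun_perm_act x s i != ffun_perm_act y s i]| = #|[set i | x i != y i]|.
Proof.
rewrite -(card_preimset [set i | x i != y i] (@perm_inj _ s^-1%g)).
by apply: eq_card => i; rewrite !inE !ffunE.
Qed.

Section TransitiveAveraging.
Variables (aT : finGroupType) (rT : finType) (to : {action aT &-> rT}).
Variable J : {set rT}.
Hypothesis transJ : [transitive [set: aT], on J | to].

Lemma sum_card_act_in (C P : {set rT}) :
  \sum_(x in C) #|[set a | to x a \in P]| = \sum_(a : aT) #|[set x in C | to x a \in P]|.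
Proof.
under eq_bigr do rewrite -sum1dep_card.
by rewrite (exchange_big_dep xpredT) //=; apply: eq_bigr => a _; rewrite sum1dep_card.
Qed.

Lemma card_act_in_const (P : {set rT}) x y : x \in J -> y \in J ->
  #|[set a | to x a \in P]| = #|[set a | to y a \in P]|.
Proof.
move=> Jx Jy; have [a _ ->] := atransP2 transJ Jx Jy.
rewrite -(card_preimset [set b | to x b \in P] (mulgI a)).
by apply: eq_card => b; rewrite !inE actM.
Qed.

Lemma card_act_preim (P : {set rT}) a : P \subset J ->
  #|[set x in J | to x a \in P]| = #|P|.
Proof.
move=> sPJ; rewrite -(card_preimset P (act_inj to a)).
apply: eq_card => x; rewrite !inE andb_idl // => Px.
by rewrite -(acts_act (atrans_acts transJ) (in_setT a)) (subsetP sPJ).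
Qed.

(* Every x in J is sent into P by the same number N of group elements, so
   |J| N = |G| |P|, while the sets below have total size |C| N over all a. *)
Lemma transitive_averaging (C P : {set rT}) : C \subset J -> P \subset J ->
  exists a, #|C| * #|P| <= #|J| * #|[set x in C | to x a \in P]|.
Proof.
move=> sCJ sPJ; have [J0 | [x0 Jx0]] := set_0Vmem J.
  by exists 1%g; move: sCJ; rewrite J0 subset0 => /eqP ->; rewrite cards0.
pose N := #|[set a | to x0 a \in P]|.
pose f a := #|[set x in C | to x a \in P]|.
have sum_f : \sum_(a : aT) f a = #|C| * N.
  rewrite -sum_card_act_in -sum_nat_const; apply: eq_bigr => x Cx.
  exact: card_act_in_const (subsetP sCJ x Cx) Jx0.
have JN : #|J| * N = #|aT| * #|P|.
  rewrite -sum_nat_const (eq_bigr (fun x => #|[set a | to x a \in P]|)).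
    rewrite sum_card_act_in (eq_bigr (fun=> #|P|)) ?sum_nat_const // => a _.
    exact: card_act_preim.
  by move=> x Jx; apply: card_act_in_const.
have [a0 _ max_a0] := @arg_maxnP _ 1%g xpredT f isT.
have aT_gt0 : 0 < #|aT| by apply/card_gt0P; exists 1%g.
exists a0; rewrite -(leq_pmul2l aT_gt0).
have sum_le : \sum_(a : aT) f a <= #|aT| * f a0.
  by rewrite -sum_nat_const; apply: leq_sum => a _; apply: max_a0.
rewrite mulnA [#|aT| * _]mulnC -mulnA -JN mulnCA -sum_f.
by rewrite mulnCA leq_mul2l sum_le orbT.
Qed.

End TransitiveAveraging.

Lemma weight_class_transitive (T : finType) k : k <= #|T| ->
  [transitive [set: {perm T}],
     on [set x : {ffun T -> bool} | #|[set i | x i]| == k] | ffun_perm_action T bool].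
Proof.
move=> k_le; set J := [set x | _].
have /card_gt0P[x0 Jx0] : 0 < #|J| by rewrite card_bool_ffun_weight bin_gt0.
apply/imsetP; exists x0 => //; apply/setP => y; apply/idP/imsetP => [Jy | [s _ ->]].
  have [|s ys] := @bool_ffun_perm _ x0 y.
    by move: Jx0 Jy; rewrite !inE => /eqP-> /eqP->.
  by exists s^-1%g; rewrite ?inE //; apply/ffunP => i; rewrite ffunE invgK ys.
move: Jx0; rewrite !inE => /eqP <-.
rewrite -(card_preimset [set i | x0 i] (@perm_inj _ s^-1%g)).
by apply/eqP/eq_card => i; rewrite !inE ffunE.
Qed.

Section MatrixCodes.
Variables m n w d : nat.

Lemma card_mat_entries : #|{: 'I_m * 'I_n}| = m * n.
Proof. by rewrite card_prod !card_ord. Qed.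

Definition mat_index (p : 'I_m * 'I_n) : 'I_(m * n) :=
  cast_ord card_mat_entries (enum_rank p).

Lemma mat_index_bij : bijective mat_index.
Proof.
apply: inj_card_bij; last by rewrite card_ord card_mat_entries.
by move=> p q /cast_ord_inj/enum_rank_inj.
Qed.

Definition reshape (x : {ffun 'I_(m * n) -> bool}) : mat m n :=
  [ffun p => x (mat_index p)].

Lemma reshape_inj : injective reshape.
Proof.
case: mat_index_bij => g indexK gK x y /ffunP eq_xy.
by apply/ffunP => k; rewrite -[k]gK; have := eq_xy (g k); rewrite !ffunE.
Qed.

Lemma card_reshape (Q : pred 'I_(m * n)) :
  #|[set p | Q (mat_index p)]| = #|[set k | Q k]|.
Proof.
rewrite -(on_card_preimset (onW_bij _ mat_index_bij)).
by apply: eq_card => p; rewrite !inE.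
Qed.

Lemma mdist_reshape x y : mdist (reshape x) (reshape y) = bdist x y.
Proof.
rewrite /mdist /bdist -(card_reshape (fun k => x k != y k)).
by apply: eq_card => p; rewrite !inE !ffunE.
Qed.

Lemma weight_reshape x : #|[set p | reshape x p]| = bweight x.
Proof.
rewrite /bweight -(card_reshape x).
by apply: eq_card => p; rewrite !inE !ffunE.
Qed.

Lemma weight_inJn (M : mat m n) : inJn w M -> #|[set p | M p]| = n * w.
Proof.
move=> /forallP col_w.
transitivity (\sum_(j : 'I_n) \sum_(i : 'I_m) (M (i, j) : nat)).
  rewrite exchange_big pair_big -sum1dep_card big_mkcond.
  by apply: eq_bigr => -[i j] _ /=; case: (M (i, j)).
rewrite -[n in RHS]card_ord -sum_nat_const; apply: eq_bigr => j _.
rewrite -(eqP (col_w j)) /col_weight -sum1dep_card [RHS]big_mkcond.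
by apply: eq_bigr => i _; case: (M (i, j)).
Qed.

Lemma card_inJn : #|[set M : mat m n | inJn w M]| = 'C(m, w) ^ n.
Proof.
pose cols (M : mat m n) : {ffun 'I_n -> {ffun 'I_m -> bool}} :=
  [ffun j => [ffun i => M (i, j)]].
pose uncols (F : {ffun 'I_n -> {ffun 'I_m -> bool}}) : mat m n := [ffun p => F p.2 p.1].
have cols_bij : bijective cols.
  exists uncols => [M | F].
    by apply/ffunP => -[i j]; rewrite !ffunE.
  by apply/ffunP => j; apply/ffunP => i; rewrite !ffunE.
rewrite -[m in RHS]card_ord -card_bool_ffun_weight -[n in RHS]card_ord -card_ffun_on.
rewrite -(on_card_preimset (onW_bij _ cols_bij)); apply: eq_card => M.
have col_eq j : [set i | cols M j i] = [set i | M (i, j)].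
  by apply/setP => i; rewrite !inE !ffunE.
by rewrite !inE; apply/forallP/ffun_onP => col_w j; have := col_w j; rewrite inE col_eq.
Qed.

Lemma card_multi_cw_code_leq_A (C : {set mat m n}) :
  {subset C <= [set M | inJn w M]} ->
  {in C &, forall M M', M != M' -> 2 * d <= mdist M M'} ->
  #|C| <= A m n w d.
Proof.
move=> C_wt C_dist; have [-> | C_nz] := eqVneq C set0; first by rewrite cards0.
rewrite /A; apply: (@leq_bigmax_cond _ _ (fun C : {set mat m n} => #|C|)).
apply/and3P; split=> //.
  by apply/forallP => M; apply/implyP => /C_wt; rewrite inE.
apply/forallP => M; apply/implyP => CM; apply/forallP => M'; apply/implyP => CM'.
exact/implyP/C_dist.
Qed.

Lemma cw_code_card_ubound (C : {set {ffun 'I_(m * n) -> bool}}) :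
  is_constant_weight_code (n * w) d C ->
  #|C| * 'C(m, w) ^ n <= A m n w d * 'C(m * n, n * w).
Proof.
case/and3P => /set0Pn[x0 Cx0] /forallP C_wt /forallP C_dist.
have wt_C x : x \in C -> #|[set p | reshape x p]| = n * w.
  by move=> Cx; rewrite weight_reshape; apply/eqP/(implyP (C_wt x)).
set J := [set M : mat m n | #|[set p | M p]| == n * w].
set P := [set M : mat m n | inJn w M].
set to := ffun_perm_action ('I_m * 'I_n)%type bool.
have transJ : [transitive [set: {perm 'I_m * 'I_n}], on J | to].
  by apply: weight_class_transitive; rewrite -(wt_C x0 Cx0); apply: max_card.
have sCJ : reshape @: C \subset J.
  by apply/subsetP => _ /imsetP[x Cx ->]; rewrite inE wt_C.
have sPJ : P \subset J by apply/subsetP => M; rewrite !inE => /weight_inJn ->.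
have [s] := transitive_averaging transJ sCJ sPJ.
set D := [set M in _ | _]; move=> avg.
have D_le : #|D| <= A m n w d.
  rewrite -(card_imset _ (act_inj to s)); apply: card_multi_cw_code_leq_A.
    by move=> _ /imsetP[M + ->]; rewrite inE => /andP[].
  move=> _ _ /imsetP[M + ->] /imsetP[M' + ->].
  rewrite !inE /mdist card_ffun_perm_act_neq.
  move=> /andP[/imsetP[x Cx ->] _] /andP[/imsetP[y Cy ->] _] neq_xy.
  rewrite -/(mdist _ _) mdist_reshape.
  have /forall_inP/(_ y Cy)/implyP := implyP (C_dist x) Cx; apply.
  by apply: contraNneq neq_xy => ->.
move: avg; rewrite card_imset; last exact: reshape_inj.
rewrite /J /P card_inJn card_bool_ffun_weight card_mat_entries => avg.
by apply: leq_trans avg _; rewrite mulnC leq_mul2r D_le orbT.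
Qed.

End MatrixCodes.

Lemma bigmax_mulr_leq (I : finType) (P : pred I) (F : I -> nat) c k :
  (forall i, P i -> F i * c <= k) -> (\max_(i | P i) F i) * c <= k.
Proof.
move=> le_k; elim/big_ind: _ => [| x y le_x le_y | i /le_k] //.
by rewrite maxnMl geq_max le_x.
Qed.

Lemma B_mul_bin_leq m n w d :
  B (m * n) (n * w) d * 'C(m, w) ^ n <= A m n w d * 'C(m * n, n * w).
Proof. by apply: bigmax_mulr_leq => C; apply: cw_code_card_ubound. Qed.

Section RealPart.
Local Open Scope R_scope.

Lemma Rpower2_eq_inv_sqrt (x : R) (n : nat) : 0 < x ->
  Rpower 2 (- (INR n / 2) * (3 + ln x / ln 2)) = / sqrt ((8 * x) ^ n).
Proof.
move=> x_gt0; have ln2_gt0 : 0 < ln 2 by rewrite -ln_1; apply: ln_increasing; lra.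
rewrite -Rpower_pow; last lra.
rewrite -Rpower_sqrt; last exact: exp_pos.
rewrite Rpower_mult -Rpower_Ropp /Rpower; congr exp.
rewrite ln_mult; try lra.
rewrite (_ : 8 = 2 ^ 3); last by simpl; lra.
rewrite ln_pow /=; last lra.
field; lra.
Qed.

Lemma sqrt_pi_scaled_leq (x K c : R) (n : nat) : 0 < x -> 0 <= K -> 0 <= c ->
  4 * x * INR n * K ^ 2 <= (8 * x) ^ n * c ^ 2 ->
  sqrt (PI * x * INR n) * / sqrt ((8 * x) ^ n) * K <= c.
Proof.
move=> x_gt0 K_ge0 c_ge0 le4.
have pow_gt0 : 0 < (8 * x) ^ n by apply: pow_lt; lra.
have sqrt_gt0 : 0 < sqrt ((8 * x) ^ n) by apply: sqrt_lt_R0.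
have n_ge0 := pos_INR n; have pi_le4 := PI_4; have pi_gt0 := PI_RGT_0.
have pixn_ge0 : 0 <= PI * x * INR n by apply: Rmult_le_pos; nra.
have xnK_ge0 : 0 <= x * INR n * K ^ 2 by apply: Rmult_le_pos; nra.
apply: (Rmult_le_reg_l (sqrt ((8 * x) ^ n))) => //.
rewrite (_ : _ * (_ * _ * K) = sqrt (PI * x * INR n) * K); last by field; lra.
rewrite -(sqrt_pow2 K) // -(sqrt_pow2 c) // -!sqrt_mult //; try nra.
by apply: sqrt_le_1; nra.
Qed.

Lemma bin_scaled_ubound (m n w : nat) : (0 < n)%nat -> (0 < w)%nat ->
  sqrt (PI * INR w * INR n) * / sqrt ((8 * INR w) ^ n) * INR 'C(m * n, n * w)
    <= INR 'C(m, w) ^ n.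
Proof.
move=> n_gt0 w_gt0; rewrite -INR_expn.
apply: sqrt_pi_scaled_leq; try exact: pos_INR; first exact/lt_0_INR/ltP.
move/leP/le_INR: (bin_sqr_ubound m n_gt0 w_gt0).
rewrite !mult_INR !INR_expn mult_INR (INR_IZR_INZ 4) (INR_IZR_INZ 8) /=; lra.
Qed.

End RealPart.

Open Scope R_scope.

Theorem corollary2 (m n w d : nat) :
  (0 < m)%nat -> (0 < n)%nat -> (0 < w)%nat -> (0 < d)%nat -> (2 * w <= m)%nat ->
  INR (A m n w d) >=
    sqrt (PI * INR w * INR n)
    * Rpower 2 (- (INR n / 2) * (3 + ln (INR w) / ln 2))
    * INR (B (m * n) (n * w) d).
Proof.
move=> _ n_gt0 w_gt0 _ le_2w_m.
have codes := le_INR _ _ (leP (B_mul_bin_leq m n w d)).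
rewrite !mult_INR INR_expn in codes.
have scaled := bin_scaled_ubound m n_gt0 w_gt0.
have bin_gt0 : 0 < INR 'C(m * n, n * w) by apply/lt_0_INR/ltP; rewrite bin_gt0; nia.
have B_ge0 := pos_INR (B (m * n) (n * w) d).
rewrite Rpower2_eq_inv_sqrt; last exact/lt_0_INR/ltP.
apply/Rle_ge/(Rmult_le_reg_r _ _ _ bin_gt0)/(Rle_trans _ _ _ _ codes).
move: scaled; set s := sqrt _ * / sqrt _ => scaled.
rewrite (_ : s * _ * _ = INR (B (m * n) (n * w) d) * (s * INR 'C(m * n, n * w)));
  last ring.
exact: Rmult_le_compat_l.
Qed.
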